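(* Let $\mathcal V,\mathcal W$ be operator spaces and $\Omega\subseteq\mathcal V_{\mathrm{nc}}$ a uniformly open nc set. For a nc function $f:\Omega\to\mathcal W_{\mathrm{nc}}$ the following are equivalent: $f$ is uniformly locally bounded; $f$ is continuous with respect to the uniformly-open topologies on $\mathcal V_{\mathrm{nc}}$ and $\mathcal W_{\mathrm{nc}}$; $f$ is uniformly analytic.
   Context: An operator space is a complex Banach space $\mathcal V$ with norms $\|\cdot\|_n$ on $\mathcal V^{n\times n}$ such that $\|X\oplus Y\|_{n+m}=\max\{\|X\|_n,\|Y\|_m\}$ and $\|TXS\|_n\le\|T\|\|X\|_n\|S\|$ for $T,S\in\mathbb C^{n\times n}$, where $X\oplus Y=\begin{bmatrix}X&0\\0&Y\end{bmatrix}$. $\mathcal V_{\mathrm{nc}}=\coprod_n\mathcal V^{n\times n}$. For $Y\in\mathcal V^{s\times s}$, $r>0$, $B_{\mathrm{nc}}(Y,r)=\coprod_m\{X\in\mathcal V^{sm\times sm}:\|X-\bigoplus_{\alpha=1}^mY\|_{sm}<r\}$; nc balls form a base of a topology on $\mathcal V_{\mathrm{nc}}$, the uniformly-open topology (its open sets are uniformly open). A nc set is closed under direct sums, $\Omega_n=\Omega\cap\mathcal V^{n\times n}$; a nc function satisfies $f(\Omega_n)\subseteq\mathcal W^{n\times n}$, $f(X\oplus Y)=f(X)\oplus f(Y)$, $f(SXS^{-1})=Sf(X)S^{-1}$ for invertible $S\in\mathbb C^{n\times n}$ with $X,SXS^{-1}\in\Omega_n$. $f$ is uniformly locally bounded if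 for every $s$ and $Y\in\Omega_s$ there is $r>0$ with $B_{\mathrm{nc}}(Y,r)\subseteq\Omega$ and $\sup\{\|f(X)\|_{sm}:m\in\mathbb N,X\in B_{\mathrm{nc}}(Y,r)\cap\mathcal V^{sm\times sm}\}<\infty$. $f$ is G-differentiable if for all $n$, $X\in\Omega_n$, $Z\in\mathcal V^{n\times n}$, $\lim_{t\to0}(f(X+tZ)-f(X))/t$ exists in $\mathcal W^{n\times n}$; $f$ is uniformly analytic if it is uniformly locally bounded and G-differentiable. *)

From HB Require Import structures.
From mathcomp Require Import all_boot all_order all_algebra.
From mathcomp Require Import boolp classical_sets reals.
From mathcomp Require Import complex.
Set Implicit Arguments. Unset Strict Implicit. Unset Printing Implicit Defensive.
Import Order.TTheory GRing.Theory Num.Theory.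
Local Open Scope ring_scope.
Local Open Scope classical_set_scope.

Section OpSpaces.
Variable R : realType.
Local Notation C := (R[i]).

Definition cabs (z : C) : R := ComplexField.Normc.normc z.

Definition vnorm n (v : 'cV[C]_n) : R := Num.sqrt (\sum_(i < n) cabs (v i 0) ^+ 2).

Definition opnorm n (T : 'M[C]_n) : R :=
  sup [set vnorm (T *m v) | v in [set v : 'cV[C]_n | vnorm v <= 1]].

Variable V : lmodType C.

Definition scalemxV n (c : C) (X : 'M[V]_n) : 'M[V]_n := map_mx (fun v => c *: v) X.

Definition cmul n (T : 'M[C]_n) (X : 'M[V]_n) (S : 'M[C]_n) : 'M[V]_n :=
  \matrix_(i, j) \sum_(k < n) \sum_(l < n) (T i k * S l j) *: X k l.

Definition dsum n m (X : 'M[V]_n) (Y : 'M[V]_m) : 'M[V]_(n + m) := block_mx X 0 0 Y.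

Fixpoint ampl s (m : nat) (Y : 'M[V]_s) : 'M[V]_(m * s) :=
  match m return 'M[V]_(m * s) with
  | 0 => 0
  | m'.+1 => dsum Y (ampl m' Y)
  end.

(* operator space structure: norms nrm n on V^{n x n} (n >= 1), with nrm 1
   (on 1x1 matrices, i.e. on V) a complete norm, satisfying Ruan's axioms *)
Definition opspace (nrm : forall n, 'M[V]_n -> R) : Prop :=
  [/\ (forall n (X Y : 'M[V]_n) (c : C), (0 < n)%N ->
         [/\ nrm n (X + Y) <= nrm n X + nrm n Y,
             nrm n (scalemxV c X) = cabs c * nrm n X &
             (nrm n X = 0 -> X = 0)]),
      (forall u : nat -> V,
         (forall e : R, 0 < e -> exists N, forall p q, (N <= p)%N -> (N <= q)%N ->
              nrm 1%N (const_mx (u p - u q)) < e) ->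
         exists l : V, forall e : R, 0 < e -> exists N, forall p, (N <= p)%N ->
              nrm 1%N (const_mx (u p - l)) < e),
      (forall n m (X : 'M[V]_n) (Y : 'M[V]_m), (0 < n)%N -> (0 < m)%N ->
         nrm (n + m)%N (dsum X Y) = Num.max (nrm n X) (nrm m Y)) &
      (forall n (T S : 'M[C]_n) (X : 'M[V]_n), (0 < n)%N ->
         nrm n (cmul T X S) <= opnorm T * nrm n X * opnorm S)].

(* V_nc = disjoint union of the V^{n x n} *)
Definition ncpt := {n : nat & 'M[V]_n}.
Definition ncp n (X : 'M[V]_n) : ncpt := existT (fun k => 'M[V]_k) n X.

Definition ncball (nrm : forall n, 'M[V]_n -> R) s (Y : 'M[V]_s) (r : R) : set ncpt :=
  fun p => exists m (X : 'M[V]_(m * s)),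
      (0 < m)%N /\ p = ncp X /\ nrm (m * s)%N (X - ampl m Y) < r.

(* uniformly open sets: open sets of the topology with base the nc balls
   (centres of positive size, positive radius) *)
Definition uopen (nrm : forall n, 'M[V]_n -> R) (U : set ncpt) : Prop :=
  forall p, U p -> exists s (Y : 'M[V]_s) (r : R),
      [/\ (0 < s)%N, 0 < r, ncball nrm Y r p & ncball nrm Y r `<=` U].

Definition ncset (Om : set ncpt) : Prop :=
  forall n m (X : 'M[V]_n) (Y : 'M[V]_m), Om (ncp X) -> Om (ncp Y) -> Om (ncp (dsum X Y)).

End OpSpaces.

Arguments ncpt {R} V.
Arguments ncp {R V n}.

Section NCFun.
Variable R : realType.
Local Notation C := (R[i]).
Variables V W : lmodType C.
Variable nV : forall n, 'M[V]_n -> R.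
Variable nW : forall n, 'M[W]_n -> R.
Variable Om : set (ncpt V).
(* f is a function Om -> W_nc; it is given as a family of maps on all of
   V^{n x n}, only its values on Om matter *)
Variable f : forall n, 'M[V]_n -> 'M[W]_n.

Definition ncfun : Prop :=
  (forall n m (X : 'M[V]_n) (Y : 'M[V]_m), Om (ncp X) -> Om (ncp Y) ->
      f (dsum X Y) = dsum (f X) (f Y)) /\
  (forall n (X : 'M[V]_n) (S : 'M[C]_n), S \in unitmx ->
      Om (ncp X) -> Om (ncp (cmul S X (invmx S))) ->
      f (cmul S X (invmx S)) = cmul S (f X) (invmx S)).

Definition uloc_bounded : Prop :=
  forall s (Y : 'M[V]_s), Om (ncp Y) ->
    exists r : R, [/\ 0 < r, ncball nV Y r `<=` Om &
      exists M : R, forall n (X : 'M[V]_n), ncball nV Y r (ncp X) -> nW (f X) <= M].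

(* continuity of f : Om -> W_nc, Om with the subspace topology *)
Definition ucontinuous : Prop :=
  forall U : set (ncpt W), uopen nW U ->
    exists O : set (ncpt V), uopen nV O /\
      forall n (X : 'M[V]_n), (Om (ncp X) /\ U (ncp (f X))) <-> (Om (ncp X) /\ O (ncp X)).

Definition G_differentiable : Prop :=
  forall n (X Z : 'M[V]_n), Om (ncp X) ->
    exists L : 'M[W]_n, forall e : R, 0 < e -> exists d : R, 0 < d /\
      forall t : C, t != 0 -> cabs t < d ->
        nW (scalemxV t^-1 (f (X + scalemxV t Z) - f X) - L) < e.

Definition uanalytic : Prop := uloc_bounded /\ G_differentiable.

End NCFun.

From HB Require Import structures.
From mathcomp Require Import all_boot all_order all_algebra.
From mathcomp Require Import boolp classical_sets reals.
From mathcomp Require Import complex.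
From mathcomp Require Import ring lra.
From Stdlib Require Import Eqdep_dec PeanoNat.
Set Implicit Arguments. Unset Strict Implicit. Unset Printing Implicit Defensive.
Import Order.TTheory GRing.Theory Num.Theory.
Local Open Scope ring_scope.
Local Open Scope classical_set_scope.

(* The key identity: conjugating [X (+) Y] by the shear [[1, c], [0, 1]] gives
   [[X, c (Y - X)], [0, Y]], so for an nc function
   f [[X, c (Y - X)], [0, Y]] = [[f X, c (f Y - f X)], [0, f Y]].
   Since the norm of a corner is at most the norm of the whole matrix, a bound
   M for f on B_nc(Y, r) yields c ||f X - f Y|| <= M whenever the block matrix
   stays in the ball, i.e. for c of order r / ||X - Y||: f is Lipschitz on
   B_nc(Y, r/2).  This gives uniform continuity, and continuity gives local
   boundedness because the preimage of a ball is uniformly open.  For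
   G-differentiability, the same identity writes (f (X + t Z) - f X) / t as
   1/e times the corner of f [[X + t Z, e Z], [0, X]], whose argument depends
   Lipschitz-continuously on t, so the quotient converges as t -> 0. *)

Section ComplexModulus.
Variable R : realType.
Local Notation C := (R[i]).

Lemma cabs0 : cabs (0 : C) = 0. Proof. exact: ComplexField.Normc.normc0. Qed.
Lemma cabs1 : cabs (1 : C) = 1. Proof. exact: ComplexField.Normc.normc1. Qed.
Lemma cabsN (a : C) : cabs (- a) = cabs a. Proof. exact: normcN. Qed.
Lemma cabsV (a : C) : cabs a^-1 = (cabs a)^-1.
Proof. exact: ComplexField.Normc.normcV. Qed.
Lemma cabs_ge0 (a : C) : 0 <= cabs a.
Proof. by case: a => x y; apply: sqrtr_ge0. Qed.
Lemma cabsR (a : R) : cabs a%:C%C = `|a|.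
Proof. by rewrite /cabs /= expr0n /= addr0 sqrtr_sqr. Qed.

End ComplexModulus.

Section OperatorSpaceNorm.
Variable R : realType.
Local Notation C := (R[i]).
Variable V : lmodType C.

Lemma scalemxV0 n (X : 'M[V]_n) : scalemxV 0 X = 0.
Proof. by apply/matrixP => i j; rewrite !mxE scale0r. Qed.
Lemma scalemxV1 n (X : 'M[V]_n) : scalemxV 1 X = X.
Proof. by apply/matrixP => i j; rewrite !mxE scale1r. Qed.
Lemma scalemxV_0 n a : scalemxV a (0 : 'M[V]_n) = 0.
Proof. by apply/matrixP => i j; rewrite !mxE scaler0. Qed.
Lemma scalemxVA n a b (X : 'M[V]_n) : scalemxV a (scalemxV b X) = scalemxV (a * b) X.
Proof. by apply/matrixP => i j; rewrite !mxE scalerA. Qed.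
Lemma scalemxVNl n (c : C) (X : 'M[V]_n) : scalemxV (- c) X = - scalemxV c X.
Proof. by apply/matrixP => i j; rewrite !mxE scaleNr. Qed.
Lemma scalemxVN n a (X : 'M[V]_n) : scalemxV a (- X) = - scalemxV a X.
Proof. by apply/matrixP => i j; rewrite !mxE scalerN. Qed.
Lemma scalemxVB n a (X Y : 'M[V]_n) : scalemxV a (X - Y) = scalemxV a X - scalemxV a Y.
Proof. by apply/matrixP => i j; rewrite !mxE scalerDr scalerN. Qed.

Variable nrm : forall n, 'M[V]_n -> R.
Hypothesis opV : opspace nrm.

Lemma nrmD n (X Y : 'M[V]_n) : (0 < n)%N -> nrm (X + Y) <= nrm X + nrm Y.
Proof. by case: opV => H _ _ _ n0; case: (H n X Y 0 n0). Qed.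
Lemma nrmZ n c (X : 'M[V]_n) : (0 < n)%N -> nrm (scalemxV c X) = cabs c * nrm X.
Proof. by case: opV => H _ _ _ n0; case: (H n X X c n0). Qed.
Lemma nrm_eq0 n (X : 'M[V]_n) : (0 < n)%N -> nrm X = 0 -> X = 0.
Proof. by case: opV => H _ _ _ n0; case: (H n X X 0 n0). Qed.
Lemma nrm0 n : (0 < n)%N -> nrm (0 : 'M[V]_n) = 0.
Proof. by move=> n0; rewrite -(scalemxV0 0) nrmZ // cabs0 mul0r. Qed.
Lemma nrmN n (X : 'M[V]_n) : (0 < n)%N -> nrm (- X) = nrm X.
Proof.
by move=> n0; rewrite -[X in - X]scalemxV1 -scalemxVNl nrmZ // cabsN cabs1 mul1r.
Qed.
Lemma nrm_ge0 n (X : 'M[V]_n) : (0 < n)%N -> 0 <= nrm X.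
Proof. by move=> n0; have := nrmD X (- X) n0; rewrite subrr nrm0 // nrmN //; lra. Qed.
Lemma nrm_distC n (X Y : 'M[V]_n) : (0 < n)%N -> nrm (X - Y) = nrm (Y - X).
Proof. by move=> n0; rewrite -nrmN // opprB. Qed.
Lemma nrm_dsum n m (X : 'M[V]_n) (Y : 'M[V]_m) : (0 < n)%N -> (0 < m)%N ->
  nrm (dsum X Y) = Num.max (nrm X) (nrm Y).
Proof. by case: opV => _ _ H _; apply: H. Qed.
Lemma nrm_cmul n (T S : 'M[C]_n) (X : 'M[V]_n) : (0 < n)%N ->
  nrm (cmul T X S) <= opnorm T * nrm X * opnorm S.
Proof. by case: opV => _ _ _ H; apply: H. Qed.

End OperatorSpaceNorm.

Section NcPoints.
Variable R : realType.
Local Notation C := (R[i]).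
Variable V : lmodType C.

Lemma ncp_size a b (X : 'M[V]_a) (Y : 'M[V]_b) : ncp X = ncp Y -> a = b.
Proof. by move=> H; have := f_equal (@projT1 _ _) H. Qed.

Lemma ncp_inj n (X Y : 'M[V]_n) : ncp X = ncp Y -> X = Y.
Proof. exact: (inj_pair2_eq_dec _ Nat.eq_dec). Qed.

Lemma ncp_fun (T : Type) (g : forall n, 'M[V]_n -> T) a a' (A : 'M[V]_a) (A' : 'M[V]_a') :
  ncp A = ncp A' -> g a A = g a' A'.
Proof. by move=> H; have := f_equal (fun p => g (projT1 p) (projT2 p)) H. Qed.

Lemma ncp_cast a b (e : a = b) (X : 'M[V]_a) : ncp (castmx (e, e) X) = ncp X.
Proof. by case: b / e; rewrite castmx_id. Qed.

Lemma ncp_dsum a a' b b' (A : 'M[V]_a) (A' : 'M[V]_a') (B : 'M[V]_b) (B' : 'M[V]_b') :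
  ncp A = ncp A' -> ncp B = ncp B' -> ncp (dsum A B) = ncp (dsum A' B').
Proof.
move=> EA EB; have ea := ncp_size EA; have eb := ncp_size EB; subst a' b'.
by rewrite (ncp_inj EA) (ncp_inj EB).
Qed.

Lemma ncp_ampl k a a' (A : 'M[V]_a) (A' : 'M[V]_a') :
  ncp A = ncp A' -> ncp (ampl k A) = ncp (ampl k A').
Proof. by move=> EA; have ea := ncp_size EA; subst a'; rewrite (ncp_inj EA). Qed.

Lemma ncp_dsum0l n (X : 'M[V]_n) (Z : 'M[V]_0) : ncp (dsum Z X) = ncp X.
Proof.
suff -> : dsum Z X = X :> 'M_n by [].
apply/matrixP => i j; rewrite -[X i j](block_mxEdr Z 0 0 X) /dsum.
by congr (block_mx _ _ _ _ _ _); apply: val_inj.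
Qed.

Lemma ncp_dsum0r n (X : 'M[V]_n) (Z : 'M[V]_0) : ncp (dsum X Z) = ncp X.
Proof.
rewrite -(ncp_cast (addn0 n)); congr ncp; apply/matrixP => i j; rewrite castmxE.
have -> : cast_ord (esym (addn0 n)) i = lshift 0 i by apply: val_inj.
have -> : cast_ord (esym (addn0 n)) j = lshift 0 j by apply: val_inj.
by rewrite /dsum block_mxEul.
Qed.

Lemma ncp_dsumA a b c (A : 'M[V]_a) (B : 'M[V]_b) (D : 'M[V]_c) :
  ncp (dsum A (dsum B D)) = ncp (dsum (dsum A B) D).
Proof.
rewrite /dsum -[0 : 'M_(a, b + c)]row_mx0 -[0 : 'M_(b + c, a)]col_mx0.
by rewrite block_mxA row_mx0 col_mx0 ncp_cast.
Qed.

Lemma ncp_ampl1 s (Y : 'M[V]_s) : ncp (ampl 1 Y) = ncp Y.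
Proof. exact: ncp_dsum0r. Qed.

Lemma ncp_amplD s m k (Y : 'M[V]_s) :
  ncp (ampl (m + k) Y) = ncp (dsum (ampl m Y) (ampl k Y)).
Proof.
elim: m => [|m IH]; first by rewrite /= ncp_dsum0l.
by rewrite addSn /= (ncp_dsum (erefl (ncp Y)) IH) ncp_dsumA.
Qed.

Lemma ncp_amplM s m k (Y : 'M[V]_s) : ncp (ampl k (ampl m Y)) = ncp (ampl (k * m) Y).
Proof.
elim: k => [//|k IH].
by rewrite [(k.+1 * m)%N]mulSn ncp_amplD /=; apply: ncp_dsum.
Qed.

Lemma ncp_ampl_uniq s m1 m2 N (A B : 'M[V]_N) (Y : 'M[V]_s) : (0 < s)%N ->
  ncp A = ncp (ampl m1 Y) -> ncp B = ncp (ampl m2 Y) -> A = B.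
Proof.
move=> s0 EA EB; have ea := ncp_size EA; have eb := ncp_size EB.
have em : m1 = m2 by apply/eqP; rewrite -(eqn_pmul2r s0) -ea -eb.
by subst m2; apply: ncp_inj; rewrite EA EB.
Qed.

Lemma dsumB a b (A A' : 'M[V]_a) (B B' : 'M[V]_b) :
  dsum (A - A') (B - B') = dsum A B - dsum A' B'.
Proof. by rewrite /dsum opp_block_mx add_block_mx !subr0. Qed.

Lemma amplB s k (X Y : 'M[V]_s) : ampl k (X - Y) = ampl k X - ampl k Y.
Proof. by elim: k => [|k IH] /=; rewrite ?subr0 // IH dsumB. Qed.

End NcPoints.

Section ScalarAction.
Variable R : realType.
Local Notation C := (R[i]).
Variable V : lmodType C.

Definition lmul m n p (T : 'M[C]_(m, n)) (X : 'M[V]_(n, p)) : 'M[V]_(m, p) :=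
  \matrix_(i, j) \sum_k T i k *: X k j.
Definition rmul m n p (X : 'M[V]_(m, n)) (S : 'M[C]_(n, p)) : 'M[V]_(m, p) :=
  \matrix_(i, j) \sum_k S k j *: X i k.

Lemma cmulE n (T S : 'M[C]_n) (X : 'M[V]_n) : cmul T X S = lmul T (rmul X S).
Proof.
apply/matrixP => i j; rewrite !mxE; apply: eq_bigr => k _.
by rewrite mxE scaler_sumr; apply: eq_bigr => l _; rewrite scalerA.
Qed.

Lemma lmul_scalar n a (X : 'M[V]_n) : lmul a%:M X = scalemxV a X.
Proof.
apply/matrixP => i j; rewrite !mxE (bigD1 i) //= big1 ?addr0 => [|k ki].
  by rewrite mxE eqxx mulr1n.
by rewrite mxE eq_sym (negbTE ki) mulr0n scale0r.
Qed.

Lemma rmul_scalar n a (X : 'M[V]_n) : rmul X a%:M = scalemxV a X.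
Proof.
apply/matrixP => i j; rewrite !mxE (bigD1 j) //= big1 ?addr0 => [|k kj].
  by rewrite mxE eqxx mulr1n.
by rewrite mxE (negbTE kj) mulr0n scale0r.
Qed.

Lemma lmul_col_mx m1 m2 n p (T1 : 'M[C]_(m1, n)) (T2 : 'M[C]_(m2, n)) (X : 'M[V]_(n, p)) :
  lmul (col_mx T1 T2) X = col_mx (lmul T1 X) (lmul T2 X).
Proof.
apply/matrixP => i j; rewrite -(splitK i); case: (split i) => i' /=.
  by rewrite col_mxEu !mxE; apply: eq_bigr => k _; rewrite col_mxEu.
by rewrite col_mxEd !mxE; apply: eq_bigr => k _; rewrite col_mxEd.
Qed.

Lemma lmul_row_mx m n p1 p2 (T : 'M[C]_(m, n)) (X1 : 'M[V]_(n, p1)) (X2 : 'M[V]_(n, p2)) :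
  lmul T (row_mx X1 X2) = row_mx (lmul T X1) (lmul T X2).
Proof.
apply/matrixP => i j; rewrite -(splitK j); case: (split j) => j' /=.
  by rewrite row_mxEl !mxE; apply: eq_bigr => k _; rewrite row_mxEl.
by rewrite row_mxEr !mxE; apply: eq_bigr => k _; rewrite row_mxEr.
Qed.

Lemma lmul_row_col m n1 n2 p (T1 : 'M[C]_(m, n1)) (T2 : 'M[C]_(m, n2))
  (X1 : 'M[V]_(n1, p)) (X2 : 'M[V]_(n2, p)) :
  lmul (row_mx T1 T2) (col_mx X1 X2) = lmul T1 X1 + lmul T2 X2.
Proof.
apply/matrixP => i j; rewrite !mxE big_split_ord /=; congr (_ + _).
  by apply: eq_bigr => k _; rewrite row_mxEl col_mxEu.
by apply: eq_bigr => k _; rewrite row_mxEr col_mxEd.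
Qed.

Lemma rmul_col_mx m1 m2 n p (X1 : 'M[V]_(m1, n)) (X2 : 'M[V]_(m2, n)) (S : 'M[C]_(n, p)) :
  rmul (col_mx X1 X2) S = col_mx (rmul X1 S) (rmul X2 S).
Proof.
apply/matrixP => i j; rewrite -(splitK i); case: (split i) => i' /=.
  by rewrite col_mxEu !mxE; apply: eq_bigr => k _; rewrite col_mxEu.
by rewrite col_mxEd !mxE; apply: eq_bigr => k _; rewrite col_mxEd.
Qed.

Lemma rmul_row_mx m n p1 p2 (X : 'M[V]_(m, n)) (S1 : 'M[C]_(n, p1)) (S2 : 'M[C]_(n, p2)) :
  rmul X (row_mx S1 S2) = row_mx (rmul X S1) (rmul X S2).
Proof.
apply/matrixP => i j; rewrite -(splitK j); case: (split j) => j' /=.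
  by rewrite row_mxEl !mxE; apply: eq_bigr => k _; rewrite row_mxEl.
by rewrite row_mxEr !mxE; apply: eq_bigr => k _; rewrite row_mxEr.
Qed.

Lemma rmul_row_col m n1 n2 p (X1 : 'M[V]_(m, n1)) (X2 : 'M[V]_(m, n2))
  (S1 : 'M[C]_(n1, p)) (S2 : 'M[C]_(n2, p)) :
  rmul (row_mx X1 X2) (col_mx S1 S2) = rmul X1 S1 + rmul X2 S2.
Proof.
apply/matrixP => i j; rewrite !mxE big_split_ord /=; congr (_ + _).
  by apply: eq_bigr => k _; rewrite row_mxEl col_mxEu.
by apply: eq_bigr => k _; rewrite row_mxEr col_mxEd.
Qed.

Definition scalar_block N (a b c d : C) : 'M[C]_(N + N) := block_mx a%:M b%:M c%:M d%:M.

Lemma lmul_scalar_block N a b c d (X11 X12 X21 X22 : 'M[V]_N) :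
  lmul (scalar_block N a b c d) (block_mx X11 X12 X21 X22) =
  block_mx (scalemxV a X11 + scalemxV b X21) (scalemxV a X12 + scalemxV b X22)
           (scalemxV c X11 + scalemxV d X21) (scalemxV c X12 + scalemxV d X22).
Proof.
rewrite /scalar_block [block_mx a%:M _ _ _]block_mxEv lmul_col_mx.
rewrite [block_mx X11 _ _ _]block_mxEh !lmul_row_mx !lmul_row_col !lmul_scalar.
by rewrite block_mxEv.
Qed.

Lemma rmul_scalar_block N a b c d (X11 X12 X21 X22 : 'M[V]_N) :
  rmul (block_mx X11 X12 X21 X22) (scalar_block N a b c d) =
  block_mx (scalemxV a X11 + scalemxV c X12) (scalemxV b X11 + scalemxV d X12)
           (scalemxV a X21 + scalemxV c X22) (scalemxV b X21 + scalemxV d X22).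
Proof.
rewrite /scalar_block [block_mx a%:M _ _ _]block_mxEh rmul_row_mx.
rewrite [block_mx X11 _ _ _]block_mxEv !rmul_col_mx !rmul_row_col !rmul_scalar.
by rewrite block_mxEh.
Qed.

End ScalarAction.

Section ContractionNorm.
Variable R : realType.
Local Notation C := (R[i]).

Definition sqnorm n (v : 'cV[C]_n) : R := \sum_(i < n) cabs (v i 0) ^+ 2.

Lemma sqnorm_ge0 n (v : 'cV[C]_n) : 0 <= sqnorm v.
Proof. by apply: sumr_ge0 => i _; apply: sqr_ge0. Qed.

Lemma sqnorm0 n : sqnorm (0 : 'cV[C]_n) = 0.
Proof. by apply: big1 => i _; rewrite mxE cabs0 expr0n. Qed.

Lemma sqnorm_col_mx n1 n2 (x : 'cV[C]_n1) (y : 'cV[C]_n2) :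
  sqnorm (col_mx x y) = sqnorm x + sqnorm y.
Proof.
rewrite /sqnorm big_split_ord /=.
by congr (_ + _); apply: eq_bigr => i _; rewrite ?col_mxEu ?col_mxEd.
Qed.

Lemma opnorm_contraction n (T : 'M[C]_n) :
  (forall v, sqnorm (T *m v) <= sqnorm v) -> 0 <= opnorm T <= 1.
Proof.
move=> HT; set E := [set vnorm (T *m v) | v in [set v | vnorm v <= 1]].
have vnorm0 : vnorm (0 : 'cV[C]_n) = 0 by rewrite /vnorm -[\sum_i _]/(sqnorm 0) sqnorm0 sqrtr0.
have E0 : E 0 by exists 0; rewrite /= ?mulmx0 vnorm0.
have E1 : ubound E 1.
  by move=> _ [v /= v1 <-]; apply: le_trans v1; exact: ler_wsqrtr (HT v).
apply/andP; split; first by apply: (ub_le_sup _ E0); exists 1.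
by apply: ge_sup => //; exists 0.
Qed.

Lemma opnorm1 n : 0 <= opnorm (1%:M : 'M[C]_n) <= 1.
Proof. by apply: opnorm_contraction => v; rewrite mul1mx. Qed.

Lemma scalar_block_mulmx N a b c d (v : 'cV[C]_(N + N)) :
  scalar_block N a b c d *m v =
  col_mx (a *: usubmx v + b *: dsubmx v) (c *: usubmx v + d *: dsubmx v).
Proof. by rewrite -{1}(vsubmxK v) /scalar_block mul_block_col !mul_scalar_mx. Qed.

Lemma opnorm_scalar_block N (a b c d : C) :
  (forall v1 v2 : 'cV[C]_N,
     sqnorm (a *: v1 + b *: v2) + sqnorm (c *: v1 + d *: v2) <= sqnorm v1 + sqnorm v2) ->
  0 <= opnorm (scalar_block N a b c d) <= 1.
Proof.
move=> H; apply: opnorm_contraction => v.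
rewrite scalar_block_mulmx sqnorm_col_mx.
rewrite -[in leRHS](vsubmxK v) sqnorm_col_mx; exact: H.
Qed.

Lemma scalar_block_mul N (a b c d a' b' c' d' : C) :
  scalar_block N a b c d *m scalar_block N a' b' c' d' =
  scalar_block N (a * a' + b * c') (a * b' + b * d') (c * a' + d * c') (c * b' + d * d').
Proof. by rewrite /scalar_block mulmx_block -!scalar_mxM !raddfD. Qed.

Lemma scalar_block1 N : scalar_block N 1 0 0 1 = 1%:M :> 'M[C]_(N + N).
Proof. by rewrite /scalar_block (scalar_mx_block N N) !raddf0. Qed.

Definition shear N (c : C) := scalar_block N 1 c 0 1.

Lemma shear_unit N c : shear N c \in unitmx /\ invmx (shear N c) = shear N (- c).
Proof.
have H : shear N c *m shear N (- c) = 1%:M.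
  by rewrite scalar_block_mul -scalar_block1; congr scalar_block; ring.
have [U _] := mulmx1_unit H; split => //.
by rewrite -[invmx _]mulmx1 -H mulmxA mulVmx // mul1mx.
Qed.

End ContractionNorm.

Section BlockNorms.
Variable R : realType.
Local Notation C := (R[i]).
Variable V : lmodType C.

Lemma cmul_shear_dsum N (c : C) (A B : 'M[V]_N) :
  cmul (shear N c) (dsum A B) (invmx (shear N c)) = block_mx A (scalemxV c (B - A)) 0 B.
Proof.
rewrite (shear_unit N c).2 cmulE /dsum rmul_scalar_block lmul_scalar_block.
rewrite ?scalemxV1 ?scalemxV0 ?scalemxV_0 ?(add0r, addr0).
by rewrite scalemxV_0 addr0 scalemxVB scalemxVNl addrC.
Qed.

Variable nrm : forall n, 'M[V]_n -> R.
Hypothesis opV : opspace nrm.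

Lemma nrm_cmul_contraction n (T S : 'M[C]_n) (X : 'M[V]_n) : (0 < n)%N ->
  0 <= opnorm T <= 1 -> 0 <= opnorm S <= 1 -> nrm (cmul T X S) <= nrm X.
Proof.
move=> n0 /andP[T0 T1] /andP[S0 S1]; apply: le_trans (nrm_cmul opV T S X n0) _.
have X0 := nrm_ge0 opV X n0.
apply: (@le_trans _ _ (opnorm T * nrm X)); first by rewrite ler_piMr ?mulr_ge0.
by rewrite ler_piMl.
Qed.

Lemma nrm_dsum0l N (X : 'M[V]_N) : (0 < N)%N -> nrm (dsum (0 : 'M_N) X) = nrm X.
Proof. by move=> N0; rewrite (nrm_dsum opV) // (nrm0 opV) // max_r // (nrm_ge0 opV). Qed.

Lemma nrm_block_ur N (b : 'M[V]_N) : (0 < N)%N -> nrm (block_mx 0 b 0 0 : 'M_(N + N)) <= nrm b.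
Proof.
move=> N0.
have -> : block_mx 0 b 0 0 = cmul (scalar_block N 0 1 0 0) (dsum (0 : 'M_N) b) (scalar_block N 1 0 0 1).
  rewrite cmulE /dsum rmul_scalar_block lmul_scalar_block.
  by rewrite ?scalemxV1 ?scalemxV0 ?scalemxV_0 ?(add0r, addr0).
rewrite -(nrm_dsum0l b N0) nrm_cmul_contraction ?addn_gt0 ?N0 //.
  apply: opnorm_scalar_block => v1 v2.
  by rewrite !scale0r scale1r ?(addr0, add0r) sqnorm0 ?(addr0, add0r) ?lerDl ?lerDr sqnorm_ge0.
by rewrite scalar_block1 opnorm1.
Qed.

Lemma nrm_ursubmx_le N (D : 'M[V]_(N + N)) : (0 < N)%N -> nrm (ursubmx D) <= nrm D.
Proof.
move=> N0; rewrite -{2}(submxK D) -(nrm_dsum0l (ursubmx D) N0).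
have -> : dsum (0 : 'M_N) (ursubmx D) =
    cmul (scalar_block N 0 0 1 0) (block_mx (ulsubmx D) (ursubmx D) (dlsubmx D) (drsubmx D))
         (scalar_block N 0 0 0 1).
  rewrite cmulE rmul_scalar_block lmul_scalar_block /dsum.
  by rewrite ?scalemxV1 ?scalemxV0 ?scalemxV_0 ?(add0r, addr0).
rewrite nrm_cmul_contraction ?addn_gt0 ?N0 //.
  apply: opnorm_scalar_block => v1 v2.
  by rewrite !scale0r scale1r ?(addr0, add0r) sqnorm0 ?(addr0, add0r) ?lerDl ?lerDr sqnorm_ge0.
apply: opnorm_scalar_block => v1 v2.
by rewrite !scale0r scale1r ?(addr0, add0r) sqnorm0 ?(addr0, add0r) ?lerDl ?lerDr sqnorm_ge0.
Qed.

Lemma nrm_block_triangular N (a b d : 'M[V]_N) : (0 < N)%N ->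
  nrm (block_mx a b 0 d) <= Num.max (nrm a) (nrm d) + nrm b.
Proof.
move=> N0; have -> : block_mx a b 0 d = dsum a d + block_mx 0 b 0 0.
  by rewrite /dsum add_block_mx !(addr0, add0r).
rewrite -(nrm_dsum opV) //; apply: le_trans (nrmD opV _ _ _) _; first by rewrite addn_gt0 N0.
by rewrite lerD2l nrm_block_ur.
Qed.

End BlockNorms.

Section NcBalls.
Variable R : realType.
Local Notation C := (R[i]).
Variable V : lmodType C.
Variable nrm : forall n, 'M[V]_n -> R.
Hypothesis opV : opspace nrm.

Lemma nrm_ampl s k (Y : 'M[V]_s) : (0 < s)%N -> (0 < k)%N -> nrm (ampl k Y) = nrm Y.
Proof.
move=> s0; elim: k => [//|[|k] IH] _; first exact: (ncp_fun nrm (ncp_ampl1 Y)).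
rewrite [ampl _ _]/= (nrm_dsum opV) //; last exact: leq_trans s0 (leq_addr _ _).
by rewrite IH // maxxx.
Qed.

Lemma ncballP s (Y : 'M[V]_s) (r : R) N (P : 'M[V]_N) :
  ncball nrm Y r (ncp P) <->
  exists m, (0 < m)%N /\ exists Ym : 'M[V]_N, ncp Ym = ncp (ampl m Y) /\ nrm (P - Ym) < r.
Proof.
split=> [[m [X [m0 [E H]]]]|[m [m0 [Ym [E H]]]]]; exists m.
  have e := ncp_size E; subst N; rewrite (ncp_inj E).
  by split=> //; exists (ampl m Y).
have e := ncp_size E; subst N; rewrite (ncp_inj E) in H.
by exists P.
Qed.

Lemma ncball_le s (Y : 'M[V]_s) (r r' : R) : r <= r' -> ncball nrm Y r `<=` ncball nrm Y r'.
Proof.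
move=> rr' _ [m [X [m0 [-> H]]]]; exists m, X; do 2!split => //.
exact: lt_le_trans rr'.
Qed.

Lemma ncball_size_gt0 s (Y : 'M[V]_s) (r : R) N (P : 'M[V]_N) : (0 < s)%N ->
  ncball nrm Y r (ncp P) -> (0 < N)%N.
Proof. by move=> s0 [m [X [m0 [E _]]]]; rewrite (ncp_size E) muln_gt0 m0. Qed.

Lemma ncball_lt n (Y P : 'M[V]_n) (r : R) : nrm (P - Y) < r -> ncball nrm Y r (ncp P).
Proof. by move=> H; apply/ncballP; exists 1%N; split=> //; exists Y; rewrite ncp_ampl1. Qed.

Lemma ncball_ampl s (Y : 'M[V]_s) (r : R) k : (0 < s)%N -> (0 < k)%N -> 0 < r ->
  ncball nrm Y r (ncp (ampl k Y)).
Proof.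
move=> s0 k0 r0; exists k, (ampl k Y); do 2!split=> //.
by rewrite subrr (nrm0 opV) // muln_gt0 k0.
Qed.

Lemma ncball_center s (Y : 'M[V]_s) (r : R) : (0 < s)%N -> 0 < r -> ncball nrm Y r (ncp Y).
Proof. by move=> s0 r0; apply: ncball_lt; rewrite subrr (nrm0 opV). Qed.

Lemma ncball_nested s (Y : 'M[V]_s) (r : R) N (X : 'M[V]_N) : (0 < s)%N ->
  ncball nrm Y r (ncp X) -> exists2 d, 0 < d & ncball nrm X d `<=` ncball nrm Y r.
Proof.
move=> s0 BX; have N0 := ncball_size_gt0 s0 BX.
case/ncballP: BX => m [m0 [Ym [E H]]].
exists (r - nrm (X - Ym)); first by rewrite subr_gt0.
move=> _ [k [Z [k0 [-> HZ]]]].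
apply/ncballP; exists (k * m)%N; split; first by rewrite muln_gt0 k0.
exists (ampl k Ym); split; first by rewrite (ncp_ampl k E) ncp_amplM.
have -> : Z - ampl k Ym = (Z - ampl k X) + ampl k (X - Ym) by rewrite amplB addrA subrK.
apply: le_lt_trans (nrmD opV _ _ _) _; first by rewrite muln_gt0 k0.
by rewrite (nrm_ampl _ N0 k0); lra.
Qed.

Lemma ncball_uopen s (Y : 'M[V]_s) (r : R) : (0 < s)%N -> uopen nrm (ncball nrm Y r).
Proof.
move=> s0 p Bp; case: (Bp) => m [X [m0 [Ep _]]]; rewrite Ep in Bp *.
have [d d0 Hd] := ncball_nested s0 Bp.
have ms0 : (0 < m * s)%N by rewrite muln_gt0 m0.
by exists (m * s)%N, X, d; split=> //; apply: ncball_center.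
Qed.

Lemma uopen_size_gt0 (O : set (ncpt V)) N (X : 'M[V]_N) :
  uopen nrm O -> O (ncp X) -> (0 < N)%N.
Proof. by move=> HO /HO [s [Y [r [s0 _ BX _]]]]; apply: ncball_size_gt0 s0 BX. Qed.

Lemma uopen_ncball (O : set (ncpt V)) N (X : 'M[V]_N) :
  uopen nrm O -> O (ncp X) -> exists2 d, 0 < d & ncball nrm X d `<=` O.
Proof.
move=> HO /HO [s [Y [r [s0 _ BX sub]]]].
by have [d d0 Hd] := ncball_nested s0 BX; exists d => // p /Hd /sub.
Qed.

Lemma ncball_block_triangular s (Y : 'M[V]_s) (r : R) N (a b d : 'M[V]_N) : (0 < s)%N ->
  ncball nrm Y r (ncp a) -> ncball nrm Y r (ncp d) ->
  ncball nrm Y (r + nrm b) (ncp (block_mx a b 0 d)).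
Proof.
move=> s0 Ba Bd; have N0 := ncball_size_gt0 s0 Ba.
case/ncballP: Ba => ma [ma0 [Ya [Ea Ha]]].
case/ncballP: Bd => md [md0 [Yd [Ed Hd]]].
have eY : Yd = Ya := ncp_ampl_uniq s0 Ed Ea; subst Yd.
apply/ncballP; exists (ma + ma)%N; split; first by rewrite addn_gt0 ma0.
exists (dsum Ya Ya); split; first by rewrite (ncp_dsum Ea Ea) ncp_amplD.
have -> : block_mx a b 0 d - dsum Ya Ya = block_mx (a - Ya) b 0 (d - Ya).
  by rewrite /dsum opp_block_mx add_block_mx oppr0 !addr0.
apply: le_lt_trans (nrm_block_triangular opV _ _ _ N0) _.
by rewrite ltrD2r gt_max Ha Hd.
Qed.

End NcBalls.

Section NcFunctions.
Variable R : realType.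
Local Notation C := (R[i]).
Variables V W : lmodType C.
Variable nV : forall n, 'M[V]_n -> R.
Variable nW : forall n, 'M[W]_n -> R.
Variable Om : set (ncpt V).
Variable f : forall n, 'M[V]_n -> 'M[W]_n.
Hypothesis opV : opspace nV.
Hypothesis opW : opspace nW.
Hypothesis uopenOm : uopen nV Om.
Hypothesis ncsetOm : ncset Om.
Hypothesis ncfun_f : ncfun Om f.

Definition ncmap (p : ncpt V) : ncpt W := ncp (f (projT2 p)).

Lemma ncfun_ampl N (X : 'M[V]_N) k : Om (ncp X) -> (0 < k)%N ->
  Om (ncp (ampl k X)) /\ f (ampl k X) = ampl k (f X).
Proof.
move=> OX; elim: k => [//|[|k] IH] _.
  rewrite ncp_ampl1; split=> //; apply: ncp_inj.
  by rewrite ncp_ampl1; apply: (ncp_fun (fun n M => ncp (f M)) (ncp_ampl1 X)).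
have [OkX fkX] := IH isT.
by rewrite [ampl _ X]/= ncfun_f.1 // fkX; split=> //; apply: ncsetOm.
Qed.

Lemma ncfun_shear_block N (c : C) (A B : 'M[V]_N) :
  Om (ncp A) -> Om (ncp B) -> Om (ncp (block_mx A (scalemxV c (B - A)) 0 B)) ->
  f (block_mx A (scalemxV c (B - A)) 0 B) = block_mx (f A) (scalemxV c (f B - f A)) 0 (f B).
Proof.
move=> OA OB OQ; have [unit_shear _] := shear_unit N c.
rewrite -(cmul_shear_dsum c A B) in OQ *.
by rewrite ncfun_f.2 // ?ncfun_f.1 ?cmul_shear_dsum //; apply: ncsetOm.
Qed.

Lemma ncball_bound_ge0 s (Y : 'M[V]_s) (r M : R) : (0 < s)%N -> 0 < r ->
  (forall n (X : 'M[V]_n), ncball nV Y r (ncp X) -> nW (f X) <= M) -> 0 <= M.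
Proof.
move=> s0 r0 bound_f; apply: le_trans (bound_f _ _ (ncball_center opV Y s0 r0)).
exact: (nrm_ge0 opW).
Qed.

(* With c := r / (4 ||B - A||) the shear block [[A, c (B - A)], [0, B]] lies in
   B_nc(Y, r), and its corner is c (f B - f A). *)
Lemma ncfun_lipschitz s (Y : 'M[V]_s) (r M : R) : (0 < s)%N -> 0 < r ->
  ncball nV Y r `<=` Om ->
  (forall n (X : 'M[V]_n), ncball nV Y r (ncp X) -> nW (f X) <= M) ->
  forall N (A B : 'M[V]_N), ncball nV Y (r / 2) (ncp A) -> ncball nV Y (r / 2) (ncp B) ->
  nW (f A - f B) <= 4 * M / r * nV (A - B).
Proof.
move=> s0 r0 ballOm bound_f N A B BA BB; have N0 := ncball_size_gt0 s0 BA.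
have r2r : r / 2 <= r by lra.
have OA := ballOm _ (ncball_le r2r BA); have OB := ballOm _ (ncball_le r2r BB).
have [AB0 | ABn0] := eqVneq (nV (B - A)) 0.
  have -> : B = A by apply/eqP; rewrite -subr_eq0; apply/eqP/(nrm_eq0 opV N0).
  by rewrite !subrr (nrm0 opW) // (nrm0 opV) // mulr0.
set d := nV (B - A) in ABn0; have d0 : 0 < d by rewrite lt_def ABn0 (nrm_ge0 opV).
pose c := r / (4 * d); have c0 : 0 < c by rewrite divr_gt0 // mulr_gt0.
set Q := block_mx A (scalemxV c%:C%C (B - A)) 0 B.
have BQ : ncball nV Y r (ncp Q).
  move: (ncball_block_triangular opV (scalemxV c%:C%C (B - A)) s0 BA BB).
  apply: ncball_le.
  rewrite (nrmZ opV) // cabsR gtr0_norm // -/d /c.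
  have -> : r / (4 * d) * d = r / 4 by field; rewrite lt0r_neq0.
  lra.
have corner : c * nW (f B - f A) <= M.
  apply: le_trans (bound_f _ _ BQ); have OQ := ballOm _ BQ.
  have := nrm_ursubmx_le opW (f Q) N0.
  by rewrite /Q ncfun_shear_block // block_mxKur (nrmZ opW) // cabsR gtr0_norm.
rewrite -ler_pdivlMl // in corner.
rewrite (nrm_distC opW) // (nrm_distC opV) // -/d; apply: le_trans corner _.
suff -> : c^-1 * M = 4 * M / r * d by [].
by rewrite /c; field; do ?split; rewrite lt0r_neq0.
Qed.

Lemma uloc_bounded_preimage : uloc_bounded nV nW Om f ->
  forall n (X : 'M[V]_n) (U : set (ncpt W)), uopen nW U -> Om (ncp X) -> U (ncp (f X)) ->
  exists2 rho, 0 < rho & ncball nV X rho `<=` [set q | Om q /\ U (ncmap q)].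
Proof.
move=> HLB n X U uopenU OX UfX; have n0 := uopen_size_gt0 uopenOm OX.
have [r [r0 ballOm [M bound_f]]] := HLB n X OX.
have Lf := ncfun_lipschitz n0 r0 ballOm bound_f.
have K0 : 0 <= 4 * M / r by rewrite divr_ge0 ?mulr_ge0 ?(ncball_bound_ge0 n0 r0 bound_f) ?ltW.
set K := 4 * M / r in Lf K0.
have [d d0 ballU] := uopen_ncball opW uopenU UfX.
pose rho := Num.min (r / 2) (d / (K + 1)).
have K1 : 0 < K + 1 by rewrite ltr_wpDl.
have rho0 : 0 < rho by rewrite lt_min !divr_gt0.
have Krho : K * rho < d.
  apply: (@le_lt_trans _ _ (K * (d / (K + 1)))); first by rewrite ler_wpM2l // ge_min lexx orbT.
  by rewrite mulrA ltr_pdivrMr // mulrDr mulr1 mulrC ltrDl.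
exists rho => // _ [k [Z [k0 [-> BZ]]]].
have BZ2 : ncball nV X (r / 2) (ncp Z).
  by apply: ncball_le (_ : ncball nV X rho (ncp Z)); [rewrite ge_min lexx | exists k, Z].
split; first by apply: ballOm; apply: ncball_le BZ2; lra.
have [_ fkX] := ncfun_ampl OX k0.
apply: ballU; exists k, (f Z); do 2!split => //; rewrite -fkX.
apply: le_lt_trans (Lf _ _ _ BZ2 (ncball_ampl opV _ n0 k0 _)) _; first by rewrite divr_gt0.
by apply: le_lt_trans Krho; rewrite ler_wpM2l // ltW.
Qed.

Lemma uloc_bounded_ucontinuous : uloc_bounded nV nW Om f -> ucontinuous nV nW Om f.
Proof.
move=> HLB U uopenU; pose G := [set q | Om q /\ U (ncmap q)].
(* the uniform interior of the preimage G *)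
exists (fun p => exists s (Y : 'M[V]_s) r,
  [/\ (0 < s)%N, 0 < r, ncball nV Y r p & ncball nV Y r `<=` G]).
split=> [p [s [Y [r [s0 r0 Bp BG]]]] | n X].
  by exists s, Y, r; split=> // q Bq; exists s, Y, r.
split=> [[OX UfX] | [OX [s [Y [r [_ _ BX BG]]]]]]; last by have [] := BG _ BX.
split=> //; have n0 := uopen_size_gt0 uopenOm OX.
have [rho rho0 BG] := uloc_bounded_preimage HLB uopenU OX UfX.
by exists n, X, rho; split=> //; apply: ncball_center.
Qed.

Lemma ucontinuous_uloc_bounded : ucontinuous nV nW Om f -> uloc_bounded nV nW Om f.
Proof.
move=> Hc s Y OY; have s0 := uopen_size_gt0 uopenOm OY.
have [O [uopenO preimO]] := Hc _ (ncball_uopen opW (Y := f Y) (r := 1) s0).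
have [_ OY'] := (preimO s Y).1 (conj OY (ncball_center opW (f Y) s0 ltr01)).
have [d1 d10 B1] := uopen_ncball opV uopenO OY'.
have [d2 d20 B2] := uopen_ncball opV uopenOm OY.
have sub1 : ncball nV Y (Num.min d1 d2) `<=` ncball nV Y d1 by apply: ncball_le; rewrite ge_min lexx.
have sub2 : ncball nV Y (Num.min d1 d2) `<=` ncball nV Y d2.
  by apply: ncball_le; rewrite ge_min lexx orbT.
exists (Num.min d1 d2); split; first by rewrite lt_min d10 d20.
  by move=> p /sub2 /B2.
exists (nW (f Y) + 1) => n X BX; have OX := B2 _ (sub2 _ BX).
have [_ /ncballP [m [m0 [Ym [Em HYm]]]]] := (preimO n X).2 (conj OX (B1 _ (sub1 _ BX))).
have n0 := uopen_size_gt0 uopenOm OX.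
rewrite -[f X](subrK Ym); apply: le_trans (nrmD opW _ _ n0) _.
by rewrite (ncp_fun nW Em) (nrm_ampl opW) //; lra.
Qed.

(* The difference quotient is a corner of f at a shear block with
   c = - e / t, which makes c (X - (X + t Z)) = e Z. *)
Lemma ncfun_difference_quotient n (X Z : 'M[V]_n) (t e : C) : t != 0 -> e != 0 ->
  Om (ncp X) -> Om (ncp (X + scalemxV t Z)) ->
  Om (ncp (block_mx (X + scalemxV t Z) (scalemxV e Z) 0 X)) ->
  scalemxV t^-1 (f (X + scalemxV t Z) - f X) =
  scalemxV e^-1 (ursubmx (f (block_mx (X + scalemxV t Z) (scalemxV e Z) 0 X))).
Proof.
move=> t0 e0 OX OA; set A := X + scalemxV t Z.
have -> : scalemxV e Z = scalemxV (- (e / t)) (X - A).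
  by rewrite /A opprD addNKr scalemxVN scalemxVA -scalemxVNl; congr scalemxV; field.
move=> OP; rewrite ncfun_shear_block // block_mxKur scalemxVA.
by rewrite -opprB scalemxVN -scalemxVNl; congr scalemxV; field; apply/andP.
Qed.

Lemma uloc_bounded_G_differentiable : uloc_bounded nV nW Om f -> G_differentiable nW Om f.
Proof.
move=> HLB n X Z OX; have n0 := uopen_size_gt0 uopenOm OX.
have [r [r0 ballOm [M bound_f]]] := HLB n X OX.
have Lf := ncfun_lipschitz n0 r0 ballOm bound_f.
have K0 : 0 <= 4 * M / r by rewrite divr_ge0 ?mulr_ge0 ?(ncball_bound_ge0 n0 r0 bound_f) ?ltW.
set K := 4 * M / r in Lf K0.
have Z0 := nrm_ge0 opV Z n0.
pose e := r / (4 * (nV Z + 1)).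
have e0 : 0 < e by rewrite divr_gt0 // mulr_gt0 // ltr_wpDl.
have eC0 : e%:C%C != 0 by rewrite lt0r_neq0 // ltcR.
have eZ : e * nV Z < r / 4.
  have : e * (nV Z + 1) = r / 4 by rewrite /e; field; rewrite lt0r_neq0 // ltr_wpDl.
  by rewrite mulrDr mulr1; lra.
pose P t := block_mx (X + scalemxV t Z) (scalemxV e%:C%C Z) 0 X.
have BXt t : cabs t <= e -> ncball nV X (r / 4) (ncp (X + scalemxV t Z)).
  move=> te; apply: ncball_lt; rewrite addrC addKr (nrmZ opV) //.
  by apply: le_lt_trans eZ; rewrite ler_wpM2r.
have BP t : cabs t <= e -> ncball nV X (r / 2) (ncp (P t)).
  move=> te; have r4 : 0 < r / 4 by rewrite divr_gt0.
  move: (ncball_block_triangular opV (scalemxV e%:C%C Z) n0 (BXt t te) (ncball_center opV X n0 r4)).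
  rewrite (nrmZ opV) // cabsR gtr0_norm //.
  by apply: ncball_le; lra.
exists (scalemxV e%:C%C^-1 (ursubmx (f (P 0)))) => eps eps0.
have Kz0 : 0 < K * nV Z + 1 by rewrite ltr_wpDl // mulr_ge0.
exists (Num.min e (eps * e / (K * nV Z + 1))); split.
  by rewrite lt_min e0 divr_gt0 // mulr_gt0.
move=> t t0; rewrite lt_min => /andP[te teps].
have [r4r r2r] : r / 4 <= r /\ r / 2 <= r by split; lra.
have OXt := ballOm _ (ncball_le r4r (BXt t (ltW te))).
have OPt := ballOm _ (ncball_le r2r (BP t (ltW te))).
rewrite (ncfun_difference_quotient t0 eC0 OX OXt OPt).
have -> : scalemxV e%:C%C^-1 (ursubmx (f (P t))) - scalemxV e%:C%C^-1 (ursubmx (f (P 0))) =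
    scalemxV e%:C%C^-1 (ursubmx (f (P t) - f (P 0))).
  by apply/matrixP => i j; rewrite !mxE scalerBr.
rewrite (nrmZ opW) // cabsV cabsR gtr0_norm // ltr_pdivrMl //.
apply: le_lt_trans (nrm_ursubmx_le opW _ n0) _.
apply: le_lt_trans (Lf _ _ _ (BP t (ltW te)) (BP 0 _)) _; first by rewrite cabs0 ltW.
have -> : P t - P 0 = dsum (scalemxV t Z) 0.
  by rewrite /P /dsum opp_block_mx add_block_mx scalemxV0 addr0 addrAC !subrr add0r.
rewrite (nrm_dsum opV) // (nrm0 opV) // (nrmZ opV) // max_l ?mulr_ge0 ?cabs_ge0 //.
rewrite ltr_pdivlMr // [e * eps]mulrC in teps *; apply: le_lt_trans teps.
by rewrite mulrDr mulr1 mulrCA lerDl cabs_ge0.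
Qed.

End NcFunctions.

Theorem corollary7p28 (R : realType) (V W : lmodType R[i])
    (nV : forall n, 'M[V]_n -> R) (nW : forall n, 'M[W]_n -> R)
    (Om : set (ncpt V)) (f : forall n, 'M[V]_n -> 'M[W]_n) :
  opspace nV -> opspace nW -> uopen nV Om -> ncset Om -> ncfun Om f ->
  (uloc_bounded nV nW Om f <-> ucontinuous nV nW Om f) /\
  (ucontinuous nV nW Om f <-> uanalytic nV nW Om f).
Proof.
move=> opV opW uopenOm ncsetOm ncfun_f.
have bounded_cont := uloc_bounded_ucontinuous opV opW uopenOm ncsetOm ncfun_f.
have cont_bounded := @ucontinuous_uloc_bounded _ _ _ _ _ _ f opV opW uopenOm.
have bounded_diff := uloc_bounded_G_differentiable opV opW uopenOm ncsetOm ncfun_f.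
split; first by split=> [/bounded_cont | /cont_bounded].
split=> [/cont_bounded bounded | [/bounded_cont //]].
by split; last exact: bounded_diff.
Qed.
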